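(* Let $(\psi_j)_{j\ge1}$ be an orthonormal basis of $\mathbb L^2([0,1])$ consisting of infinitely differentiable functions and $(\lambda_j)_{j\ge1}$ a summable sequence of positive numbers such that: there exists $\varsigma\ge0$ such that for every integer $\ell\ge0$ there is $M_\ell>0$ with $|\partial^\ell\psi_j(u)|\le M_\ell\,j^{\ell+\varsigma}$ for all $j\ge1$, $u\in[0,1]$; and there exist $c,\gamma>0$ with $\lambda_j\le c\,j^{-(\gamma+1)}$ for all $j\ge1$. Let $\alpha:=\gamma-2\varsigma$ and assume $\alpha>0$; let $m:=\max\{k\in\mathbb Z:k<\alpha\}$, $\beta:=\alpha-m$, and $K(s,t)=\sum_{j\ge1}\lambda_j\psi_j(s)\psi_j(t)$. Then: if $\alpha$ is not an integer, $K\in C^{m,\beta}([0,1]^2)$; if $\alpha$ is an integer (so $\beta=1$), $K\in C^{m,\delta}([0,1]^2)$ for every $\delta\in(0,1)$.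
   Context: For $m\in\{0,1,\dots\}$ and $\beta\in(0,1]$, $C^{m,\beta}([0,1]^2)$ is the set of $K\in C^m([0,1]^2)$ for which there is $L>0$ such that for every multi-index $\mathbf v$ with $|\mathbf v|=m$ and all $(s,t),(s',t')\in[0,1]^2$, $|\partial^{\mathbf v}K(s,t)-\partial^{\mathbf v}K(s',t')|\le L\|(s,t)-(s',t')\|^\beta$ (Euclidean norm). *)

From HB Require Import structures.
From mathcomp Require Import all_boot all_order all_algebra.
From mathcomp Require Import all_classical all_reals all_analysis.
Set Implicit Arguments. Unset Strict Implicit. Unset Printing Implicit Defensive.
Import Order.TTheory GRing.Theory Num.Theory.
Local Open Scope ring_scope.

Section Defs.
Variable R : realType.

Definition in01 (x : R) : Prop := 0 <= x <= 1.

Definition has_deriv01 (f f' : R -> R) (x : R) : Prop :=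
  forall e : R, 0 < e -> exists2 d : R, 0 < d &
    forall h : R, h != 0 -> `|h| < d -> in01 (x + h) ->
      `|(f (x + h) - f x) / h - f' x| <= e.

(* D is the tower of derivatives of f on [0,1]: D 0 = f and D (l+1) = (D l)'
   on [0,1].  Its existence is infinite differentiability on [0,1]. *)
Definition deriv_tower01 (f : R -> R) (D : nat -> R -> R) : Prop :=
  (forall x, in01 x -> D 0%N x = f x) /\
  (forall (l : nat) x, in01 x -> has_deriv01 (D l) (D l.+1) x).

Definition dist2 (s t s' t' : R) : R := Num.sqrt ((s - s') ^+ 2 + (t - t') ^+ 2).

Definition continuous_on_sq (g : R -> R -> R) : Prop :=
  forall s t, in01 s -> in01 t -> forall e : R, 0 < e -> exists2 d : R, 0 < d &
    forall s' t', in01 s' -> in01 t' -> dist2 s t s' t' < d ->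
      `|g s' t' - g s t| < e.

(* K belongs to C^{m,beta}([0,1]^2): D a b plays the role of the partial
   derivative d^a_s d^b_t K; all partials of order <= m exist on the closed
   square (one-sided at the boundary) and are continuous there, and those of
   order exactly m are beta-Hoelder with respect to the Euclidean norm. *)
Definition holder_class (m : nat) (beta : R) (K : R -> R -> R) : Prop :=
  exists D : nat -> nat -> R -> R -> R,
    [/\ (forall s t, in01 s -> in01 t -> D 0%N 0%N s t = K s t),
        (forall a b : nat, (a + b < m)%N -> forall s t, in01 s -> in01 t ->
           has_deriv01 (fun u => D a b u t) (fun u => D a.+1 b u t) s /\
           has_deriv01 (fun v => D a b s v) (fun v => D a b.+1 s v) t),
        (forall a b : nat, (a + b <= m)%N -> continuous_on_sq (D a b)) &
        exists2 L : R, 0 < L &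
          forall a b : nat, (a + b)%N = m ->
            forall s t s' t', in01 s -> in01 t -> in01 s' -> in01 t' ->
              `|D a b s t - D a b s' t'| <= L * (dist2 s t s' t') `^ beta].

End Defs.

(* The candidate partial derivatives of K are the termwise series
   D_{a,b}(s,t) = sum_j lam_j psi_j^(a)(s) psi_j^(b)(t).  The bounds on lam_j
   and on the derivatives of psi_j make the j-th term O(j^(-1-(alpha-a-b))) and
   its Lipschitz constant O(j^(-(alpha-a-b))).  Hence for a + b <= m < alpha the
   series converge uniformly and may be differentiated termwise, and splitting
   D(s,t) - D(s',t') at j ~ 1/rho, rho the distance of the two points, bounds it
   by C rho^th for every th < 1 with th <= alpha - m.  For th = 1 the head of the
   split sum grows like rho log(1/rho), which is why an integer alpha only gives
   the exponents delta < 1. *)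

From mathcomp Require Import all_boot all_order all_algebra.
From mathcomp Require Import all_classical all_reals all_analysis.
From mathcomp Require Import ring lra.
Import Order.TTheory GRing.Theory Num.Theory.
Import numFieldNormedType.Exports.
Set Implicit Arguments.
Unset Strict Implicit.
Local Open Scope classical_set_scope.
Local Open Scope ring_scope.

Section PowerSums.
Variable R : realType.
Implicit Types (a e p th x y : R) (j n N : nat).

Lemma le0_ger_powR p x y : p <= 0 -> 0 < x -> x <= y -> y `^ p <= x `^ p.
Proof.
move=> p0 x0 xy; have y0 : 0 < y := lt_le_trans x0 xy.
rewrite -(opprK p) !(powRN _ (- p)) lef_pV2 ?posrE ?powR_gt0 //.
by apply: ge0_ler_powR; rewrite ?oppr_ge0 // nnegrE ltW.
Qed.

Lemma powRVl x p : 0 <= x -> x^-1 `^ p = x `^ (- p).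
Proof. by move=> x0; rewrite -powR_inv1 // -powRrM mulN1r. Qed.

Lemma gt0_powRD x p q : 0 < x -> x `^ (p + q) = x `^ p * x `^ q.
Proof. by move=> x0; rewrite powRD //; apply/implyP => _; rewrite gt_eqF. Qed.

Lemma powR_succ_MVT p a : 0 < a ->
  exists2 c, a < c < a + 1 & (a + 1) `^ p - a `^ p = p * c `^ (p - 1).
Proof.
move=> a0; have aa1 : a < a + 1 by rewrite ltrDl.
have [||c /[!in_itv] /= ac ->] := @MVT R (fun x => x `^ p) (fun x => p * x `^ (p - 1)) _ _ aa1.
- by move=> x /[!in_itv] /= /andP[ax _]; apply: is_derive1_powR; exact: lt_trans ax.
- apply: derivable_within_continuous => x /[!in_itv] /= /andP[ax _].
  by apply: derivable_powR; rewrite in_itv /= andbT (lt_le_trans a0).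
by exists c => //; rewrite addrAC subrr add0r mulr1.
Qed.

Lemma powR_succ_le_decr e a : 0 < e -> 0 < a ->
  (a + 1) `^ (-1 - e) <= (a `^ (- e) - (a + 1) `^ (- e)) / e.
Proof.
move=> e0 a0; have [c /andP[ac ca] Ec] := powR_succ_MVT (- e) a0.
rewrite -[a `^ _ - _]opprB Ec !mulNr opprK mulrC mulKf ?gt_eqF //.
rewrite [X in _ <= _ `^ X]addrC; apply: le0_ger_powR; [lra | exact: lt_trans ac | exact: ltW].
Qed.

Lemma powR_succ_le_incr th a : 0 <= th < 1 -> 0 <= a ->
  (a + 1) `^ (- th) <= ((a + 1) `^ (1 - th) - a `^ (1 - th)) / (1 - th).
Proof.
move=> /andP[th0 th1]; rewrite le_eqVlt => /predU1P[<-|a0].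
  by rewrite add0r powR0 ?powR1 ?subr0 ?mul1r ?invf_ge1 ?gerBl //; lra.
have [c /andP[ac ca] ->] := powR_succ_MVT (1 - th) a0.
rewrite mulrC mulKf; last by lra.
by rewrite addrAC subrr add0r; apply: le0_ger_powR; [lra | exact: lt_trans ac | exact: ltW].
Qed.

Lemma sum_powR_le th n : 0 <= th < 1 ->
  \sum_(1 <= j < n.+1) (j%:R : R) `^ (- th) <= n%:R `^ (1 - th) / (1 - th).
Proof.
move=> th01; rewrite big_add1 /=.
have -> : n%:R `^ (1 - th) = \sum_(0 <= j < n) ((j.+1%:R : R) `^ (1 - th) - j%:R `^ (1 - th)).
  by rewrite telescope_sumr // powR0 ?subr0 //; move: th01 => /andP[_]; lra.
rewrite mulr_suml ler_sum // => j _; rewrite -nat1r addrC; exact: powR_succ_le_incr.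
Qed.

Lemma sum_powR_tail_le e N n : 0 < e -> (0 < N)%N ->
  \sum_(N <= j < n) (j%:R : R) `^ (-1 - e) <= (1 + e^-1) * N%:R `^ (- e).
Proof.
move=> e0 N0; have N1 : (1 : R) <= N%:R by rewrite ler1n.
have rhs0 : 0 <= (1 + e^-1) * N%:R `^ (- e).
  by rewrite mulr_ge0 ?powR_ge0 // addr_ge0 // invr_ge0 ltW.
case: (leqP n N) => [nN|]; first by rewrite big_geq.
case: n => // n; rewrite ltnS => Nn.
rewrite big_ltn ?ltnS // big_add1 /= mulrDl mul1r lerD //.
  by apply: ler_powR => //; lra.
apply: (@le_trans _ _ (\sum_(N <= j < n) ((j%:R : R) `^ (- e) - j.+1%:R `^ (- e)) / e)).
  rewrite !big_nat ler_sum // => j /andP[Nj _]; rewrite -natr1.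
  by apply: powR_succ_le_decr; rewrite // ltr0n (leq_trans N0).
rewrite -mulr_suml (telescope_sumr_eq (fun k => - (k%:R : R) `^ (- e))) => [|//|k _]; last first.
  by rewrite opprK addrC.
rewrite opprK mulrC ler_wpM2l ?invr_ge0 ?(ltW e0) //.
by have := powR_ge0 (n%:R : R) (- e); lra.
Qed.

End PowerSums.


Section Series.
Variable R : realType.

Definition psum (u : nat -> R) (n : nat) : R := \sum_(1 <= j < n) u j.

Lemma psumB (u v : nat -> R) : psum (fun j => u j - v j) = psum u - psum v.
Proof. by apply/funext => n; rewrite /psum sumrB. Qed.

Lemma limn_dist_le (f : nat -> R) (a B : R) (N : nat) : cvgn f ->
  (forall n, (N <= n)%N -> `|f n - a| <= B) -> `|limn f - a| <= B.
Proof.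
move=> cf fB; rewrite ler_distl.
have fB' : \forall n \near \oo, a - B <= f n <= a + B.
  by near=> n; rewrite -ler_distl fB //; near: n; exact: nbhs_infty_ge.
by apply/andP; split; [apply: limr_ge | apply: limr_le] => //; apply: filterS fB' => n /andP[].
Unshelve. all: by end_near. Qed.

Section PowerDominated.
Variables (u : nat -> R) (A e : R).
Hypotheses (e0 : 0 < e) (u_le : forall j, (0 < j)%N -> `|u j| <= A * j%:R `^ (-1 - e)).

Lemma sum_norm_tail_le N n : (0 < N)%N ->
  \sum_(N <= j < n) `|u j| <= A * ((1 + e^-1) * N%:R `^ (- e)).
Proof.
move=> N0; have A0 : 0 <= A.
  by have := @u_le 1 isT; rewrite powR1 mulr1; exact: le_trans.
apply: (@le_trans _ _ (A * \sum_(N <= j < n) (j%:R : R) `^ (-1 - e))).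
  by rewrite mulr_sumr !big_nat ler_sum // => j /andP[Nj _]; apply: u_le; exact: leq_trans Nj.
by rewrite ler_wpM2l // sum_powR_tail_le.
Qed.

Lemma psum_cvg : cvgn (psum u).
Proof.
rewrite /psum (is_cvg_series_restrict 1); apply: normed_cvg.
rewrite -(is_cvg_series_restrict 1); apply: nondecreasing_is_cvgn.
  apply/nondecreasing_seqP; case=> [|n]; first by rewrite /= !big_geq.
  by rewrite /= [X in _ <= X]big_nat_recr //= lerDl.
by exists (A * ((1 + e^-1) * 1%:R `^ (- e))) => _ [n _ <-]; exact: sum_norm_tail_le.
Qed.

Lemma psum_tail_le N : (0 < N)%N ->
  `|limn (psum u) - psum u N| <= A * ((1 + e^-1) * N%:R `^ (- e)).
Proof.
move=> N0; apply: (limn_dist_le (N := N) psum_cvg) => n Nn.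
rewrite /psum (@big_cat_nat _ _ _ N 1 n _ _ N0 Nn) /= addrAC subrr add0r.
exact: le_trans (ler_norm_sum _ _ _) (sum_norm_tail_le _ N0).
Qed.

End PowerDominated.

(* Split the series at N = floor(1/rho): the first N terms are controlled by the
   second bound, the tail by the first one. *)
Lemma psum_holder_le (u : nat -> R) (A B e th rho : R) :
  0 < e -> 0 <= th < 1 -> th <= e -> 0 < rho -> 0 <= B ->
  (forall j, (0 < j)%N -> `|u j| <= A * j%:R `^ (-1 - e)) ->
  (forall j, (0 < j)%N -> `|u j| <= B * rho * j%:R `^ (- th)) ->
  `|limn (psum u)| <= (B / (1 - th) + A * (1 + e^-1)) * rho `^ th.
Proof.
move=> e0 /andP[th0 th1] the rho0 B0 uA uB.
have [rho_ge0 th1' e_ge0] : [/\ 0 <= rho, th <= 1 & 0 <= e] by split; exact: ltW.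
pose N := Num.truncn rho^-1.
have /andP[NL NU] : N%:R <= rho^-1 < N.+1%:R by apply: truncn_itv; rewrite invr_ge0.
have head : `|psum u N.+1| <= B / (1 - th) * rho `^ th.
  apply: le_trans (ler_norm_sum _ _ _) _.
  apply: (@le_trans _ _ (B * rho * \sum_(1 <= j < N.+1) (j%:R : R) `^ (- th))).
    by rewrite mulr_sumr !big_nat ler_sum // => j /andP[j0 _]; exact: uB.
  apply: (@le_trans _ _ (B * rho * (rho^-1 `^ (1 - th) / (1 - th)))).
    rewrite ler_wpM2l ?mulr_ge0 //; apply: le_trans (sum_powR_le _ _) _; first exact/andP.
    by rewrite ler_wpM2r ?invr_ge0 ?subr_ge0 // ge0_ler_powR ?subr_ge0 // nnegrE ?invr_ge0.
  rewrite powRVl // opprB powRB ?(gt_eqF rho0) ?implybT // powRr1 //.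
  suff -> : B * rho * (rho `^ th / rho / (1 - th)) = B / (1 - th) * rho `^ th by [].
  by field; rewrite subr_eq0 !gt_eqF.
have tail : `|limn (psum u) - psum u N.+1| <= A * (1 + e^-1) * rho `^ th.
  have A0 : 0 <= A by have := @uA 1 isT; rewrite powR1 mulr1; exact: le_trans.
  apply: le_trans (psum_tail_le e0 uA (ltn0Sn N)) _; rewrite -mulrA.
  apply: ler_wpM2l => //; apply: ler_wpM2l; first by rewrite addr_ge0 ?invr_ge0.
  apply: (@le_trans _ _ (N.+1%:R `^ (- th))); first by apply: ler_powR; rewrite ?ler1n ?lerN2.
  rewrite -[rho in X in _ <= X]invrK powRVl ?invr_ge0 //.
  by apply: le0_ger_powR; rewrite ?oppr_le0 ?invr_gt0 // ltW.
rewrite -[limn _](subrK (psum u N.+1)) mulrDl [X in _ <= X]addrC.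
exact: le_trans (ler_normD _ _) (lerD tail head).
Qed.
End Series.


Section Deriv01.
Variable R : realType.
Implicit Types (f g : R -> R) (k x : R).

Lemma has_deriv01_eq f g f' g' x : f =1 g -> f' =1 g' ->
  has_deriv01 f f' x -> has_deriv01 g g' x.
Proof.
move=> fg fg' fD e e0; have [d d0 Hd] := fD e e0; exists d => // h h0 hd xh.
by rewrite -!fg -fg'; exact: Hd.
Qed.

Lemma has_deriv01_cst k x : has_deriv01 (fun=> k) (fun=> 0) x.
Proof. by move=> e e0; exists 1 => // h _ _ _; rewrite subrr mul0r subrr normr0 ltW. Qed.

Lemma has_deriv01D f g f' g' x : has_deriv01 f f' x -> has_deriv01 g g' x ->
  has_deriv01 (f \+ g) (f' \+ g') x.
Proof.
move=> fD gD e e0; have e2 : 0 < e / 2 by rewrite divr_gt0.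
have [d1 d10 H1] := fD _ e2; have [d2 d20 H2] := gD _ e2.
exists (Num.min d1 d2) => [|h h0]; first by rewrite lt_min d10 d20.
rewrite lt_min => /andP[hd1 hd2] xh.
have -> : ((f \+ g) (x + h) - (f \+ g) x) / h - (f' \+ g') x
  = ((f (x + h) - f x) / h - f' x) + ((g (x + h) - g x) / h - g' x).
  by rewrite /= !mulrBl; ring.
by rewrite [e]splitr; apply: le_trans (ler_normD _ _) (lerD (H1 _ _ _ _) (H2 _ _ _ _)).
Qed.

Lemma has_deriv01Z k f f' x : has_deriv01 f f' x ->
  has_deriv01 (fun u => k * f u) (fun u => k * f' u) x.
Proof.
move=> fD e e0; have k1 : 0 < `|k| + 1 by rewrite ltr_wpDl.
have [d d0 Hd] := fD _ (divr_gt0 e0 k1); exists d => // h h0 hd xh.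
rewrite -mulrBr -mulrA -mulrBr normrM.
apply: le_trans (ler_wpM2l (normr_ge0 k) (Hd _ h0 hd xh)) _.
by rewrite mulrCA ger_pMr // ler_pdivrMr // mul1r lerDl.
Qed.

Lemma has_deriv01_psum (F F' : nat -> R -> R) x :
  (forall j, (0 < j)%N -> has_deriv01 (F j) (F' j) x) ->
  forall N, has_deriv01 (fun u => psum (F^~ u) N) (fun u => psum (F'^~ u) N) x.
Proof.
move=> FD; elim=> [|[|N] IH];
  try by apply: has_deriv01_eq (has_deriv01_cst 0 x) => u; rewrite /psum big_geq.
by apply: has_deriv01_eq (has_deriv01D IH (FD N.+1 isT)) => u; rewrite /psum [RHS]big_nat_recr.
Qed.

Lemma has_deriv01_le_near f f' x e : has_deriv01 f f' x -> 0 < e ->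
  exists2 d : R, 0 < d & forall h, `|h| < d -> in01 (x + h) ->
    `|f (x + h) - f x| <= (`|f' x| + e) * `|h|.
Proof.
move=> fD e0; have [d d0 Hd] := fD e e0; exists d => // h hd xh.
have [->|h0] := eqVneq h 0; first by rewrite addr0 subrr normr0 mulr0.
have -> : f (x + h) - f x = ((f (x + h) - f x) / h - f' x) * h + f' x * h.
  by rewrite mulrBl divfK // subrK.
apply: le_trans (ler_normD _ _) _; rewrite !normrM [X in _ <= X]mulrDl addrC.
by apply: lerD => //; rewrite ler_wpM2r // Hd.
Qed.


Section MeanValueInequality.
Variables (f f' : R -> R) (B : R).
Hypotheses (fD : forall z, in01 z -> has_deriv01 f f' z)
  (f'B : forall z, in01 z -> `|f' z| <= B).

(* Continuous induction: the supremum of the points z of [x, y] up to which the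
   estimate holds satisfies it again, and it cannot lie below y. *)
Section Segment.
Variables (x y eta : R).
Hypotheses (x01 : in01 x) (y01 : in01 y) (xy : x <= y) (eta0 : 0 < eta).

Let S := [set z | x <= z <= y /\ `|f z - f x| <= (B + eta) * (z - x)].

Let Sx : S x.
Proof. by split; [rewrite lexx xy | rewrite !subrr normr0 mulr0]. Qed.

Let S_has_sup : has_sup S.
Proof. by split; [exists x | exists y => z [/andP[_]]]. Qed.

Let xsup : x <= sup S.
Proof. exact: sup_upper_bound. Qed.

Let supy : sup S <= y.
Proof. by apply: ge_sup => [|z [/andP[_]]]; first by exists x. Qed.

Let sup01 : in01 (sup S).
Proof.
move: x01 y01 => /andP[x0 _] /andP[_ y1].
by apply/andP; split; [exact: le_trans xsup | exact: le_trans y1].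
Qed.

Let sup_local : exists2 d : R, 0 < d & forall h, `|h| < d -> in01 (sup S + h) ->
  `|f (sup S + h) - f (sup S)| <= (B + eta) * `|h|.
Proof.
have [d d0 Hd] := has_deriv01_le_near (fD sup01) eta0; exists d => // h hd h01.
by apply: le_trans (Hd h hd h01) _; rewrite ler_wpM2r // lerD2r f'B.
Qed.

Let S_sup : S (sup S).
Proof.
have [<-//|xc] := eqVneq x (sup S); have {}xc : x < sup S by rewrite lt_neqAle xc xsup.
have [d d0 Hd] := sup_local.
have ep : 0 < Num.min d (sup S - x) / 2 by rewrite divr_gt0 // lt_min d0 subr_gt0.
have [w [/andP[xw wy] Hw] cw] := sup_adherent ep S_has_sup.
have wc : w <= sup S by apply: sup_upper_bound => //; split => //; apply/andP.
have md : Num.min d (sup S - x) <= d by rewrite ge_min lexx.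
have mx : Num.min d (sup S - x) <= sup S - x by rewrite ge_min lexx orbT.
split; first by rewrite xsup supy.
have := Hd (w - sup S).
rewrite [sup S + _]addrC subrK ler0_norm ?subr_le0 // opprB distrC => Hw'.
rewrite -(subrK (f w) (f (sup S))) -addrA; apply: le_trans (ler_normD _ _) _.
have -> : (B + eta) * (sup S - x) = (B + eta) * (sup S - w) + (B + eta) * (w - x) by ring.
apply: lerD => //.
by apply: Hw'; [lra | move: x01 y01 => /andP[? _] /andP[_ ?]; apply/andP; split; lra].
Qed.

Let sup_eq : sup S = y.
Proof.
apply/eqP; rewrite eq_le supy /= leNgt; apply/negP => cy.
have [d d0 Hd] := sup_local.
have [h [h0 hd hy]] : exists h : R, [/\ 0 < h, h < d & h < y - sup S].
  have m0 : 0 < Num.min d (y - sup S) by rewrite lt_min d0 subr_gt0.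
  have [md my] : Num.min d (y - sup S) <= d /\ Num.min d (y - sup S) <= y - sup S.
    by rewrite !ge_min !lexx orbT.
  by exists (Num.min d (y - sup S) / 2); split; lra.
have ch01 : in01 (sup S + h).
  by move: sup01 y01 => /andP[c0 _] /andP[_ y1]; apply/andP; split; lra.
have : S (sup S + h).
  split.
    by apply/andP; split; [rewrite (le_trans xsup) // lerDl ltW | rewrite -lerBrDl ltW].
  case: S_sup => _ Sc; rewrite -(subrK (f (sup S)) (f _)) -addrA.
  apply: le_trans (ler_normD _ _) _.
  have -> : (B + eta) * (sup S + h - x) = (B + eta) * h + (B + eta) * (sup S - x) by ring.
  by apply: lerD => //; have := Hd h; rewrite gtr0_norm //; apply.
by move/(sup_upper_bound S_has_sup); lra.
Qed.

Lemma has_deriv01_segment_le : `|f y - f x| <= (B + eta) * (y - x).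
Proof. by case: S_sup; rewrite sup_eq. Qed.

End Segment.

Lemma has_deriv01_lipschitz x y : in01 x -> in01 y -> `|f y - f x| <= B * `|y - x|.
Proof.
wlog xy : x y / x <= y.
  move=> wlog x01 y01; have [xy|yx] := leP x y; first exact: wlog.
  by rewrite distrC [`|y - x|]distrC; apply: wlog => //; exact: ltW.
move=> x01 y01; rewrite [`|y - x|]ger0_norm ?subr_ge0 //.
have [->|xy'] := eqVneq x y; first by rewrite !subrr normr0 mulr0.
have yx0 : 0 < y - x by rewrite subr_gt0 lt_neqAle xy' xy.
apply/ler_addgt0Pr => e e0.
have := has_deriv01_segment_le x01 y01 xy (divr_gt0 e0 yx0).
by rewrite mulrDl divfK ?gt_eqF.
Qed.

End MeanValueInequality.

End Deriv01.


Section TermwiseDerivative.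
Variable R : realType.

Lemma powR_tail_small (C e eps : R) : 0 < e -> 0 < eps ->
  exists2 N : nat, (0 < N)%N & C * N%:R `^ (- e) <= eps.
Proof.
move=> e0 eps0; have C1 : 0 < `|C| + 1 by rewrite ltr_wpDl.
pose y := ((`|C| + 1) / eps) `^ e^-1.
exists (Num.truncn y).+1 => //; set N := (Num.truncn y).+1.
have N0 : (0 : R) < N%:R by rewrite ltr0n.
have CN : (`|C| + 1) / eps <= N%:R `^ e.
  have -> : (`|C| + 1) / eps = y `^ e.
    by rewrite -powRrM mulVf ?gt_eqF // powRr1 // ltW // divr_gt0.
  by rewrite ge0_ler_powR ?nnegrE ?powR_ge0 ?ltW // truncnS_gt.
rewrite powRN; apply: le_trans (_ : (`|C| + 1) / N%:R `^ e <= _).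
  by rewrite ler_wpM2r ?invr_ge0 ?powR_ge0 // (le_trans (ler_norm C)) ?lerDl.
by rewrite ler_pdivrMr ?powR_gt0 // mulrC -ler_pdivrMr.
Qed.

Lemma has_deriv01_limn_psum (F F' : nat -> R -> R) (A B e x : R) : 0 < e ->
  (forall j, (0 < j)%N -> forall z, in01 z -> has_deriv01 (F j) (F' j) z) ->
  (forall j, (0 < j)%N -> forall z, in01 z -> `|F j z| <= A * j%:R `^ (-1 - e)) ->
  (forall j, (0 < j)%N -> forall z, in01 z -> `|F' j z| <= B * j%:R `^ (-1 - e)) ->
  in01 x ->
  has_deriv01 (fun z => limn (psum (F^~ z))) (fun z => limn (psum (F'^~ z))) x.
Proof.
move=> e0 FD FA F'B x01 eps eps0; have eps3 : 0 < eps / 3 by rewrite divr_gt0.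
have [N N0 BN] := powR_tail_small (B * (1 + e^-1)) e0 eps3.
have [d d0 Hd] := has_deriv01_psum (fun j j0 => FD j j0 x x01) N eps3.
exists d => // h h0 hd xh.
have dF j : (0 < j)%N -> `|F j (x + h) - F j x| <= B * `|h| * j%:R `^ (-1 - e).
  move=> j0; have := has_deriv01_lipschitz (FD j j0) (F'B j j0) x01 xh.
  by rewrite mulrAC addrAC subrr add0r.
pose a := limn (psum (fun j => F j (x + h) - F j x)).
pose p := psum (fun j => F j (x + h) - F j x) N.
pose g := limn (psum (F'^~ x)); pose q := psum (F'^~ x) N.
have -> : limn (psum (F^~ (x + h))) - limn (psum (F^~ x)) = a.
  by rewrite /a psumB limB //; apply: psum_cvg e0 _ => j j0; apply: FA.
have Ha : `|(a - p) / h| <= eps / 3.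
  rewrite normrM normfV ler_pdivrMr ?normr_gt0 //.
  apply: le_trans (psum_tail_le e0 dF N0) _.
  rewrite [X in X <= _](_ : _ = B * (1 + e^-1) * N%:R `^ (- e) * `|h|); last by ring.
  by rewrite ler_wpM2r.
have Hg : `|g - q| <= eps / 3.
  by apply: le_trans (psum_tail_le e0 (fun j j0 => F'B j j0 x x01) N0) _; rewrite mulrA.
have Hp : `|p / h - q| <= eps / 3 by rewrite /p psumB; exact: Hd.
have -> : a / h - g = (p / h - q) + (a - p) / h - (g - q) by rewrite /=; field.
apply: le_trans (ler_normB _ _) _.
apply: le_trans (lerD (le_trans (ler_normD _ _) (lerD Hp Ha)) Hg) _.
lra.
Qed.

End TermwiseDerivative.


Section Square.
Variable R : realType.

Lemma normB_le_dist2l (s t s' t' : R) : `|s - s'| <= dist2 s t s' t'.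
Proof. by rewrite /dist2 -sqrtr_sqr ler_sqrt ?addr_ge0 ?sqr_ge0 // lerDl sqr_ge0. Qed.

Lemma normB_le_dist2r (s t s' t' : R) : `|t - t'| <= dist2 s t s' t'.
Proof. by rewrite /dist2 -sqrtr_sqr ler_sqrt ?addr_ge0 ?sqr_ge0 // lerDr sqr_ge0. Qed.

Lemma dist2_ge0 (s t s' t' : R) : 0 <= dist2 s t s' t'.
Proof. exact: sqrtr_ge0. Qed.

Lemma normMB_le (x y x' y' : R) :
  `|x * y - x' * y'| <= `|x - x'| * `|y| + `|x'| * `|y - y'|.
Proof.
have -> : x * y - x' * y' = (x - x') * y + x' * (y - y') by ring.
by rewrite -!normrM ler_normD.
Qed.

Lemma holder_continuous_on_sq (g : R -> R -> R) (L th : R) : 0 < th -> 0 <= L ->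
  (forall s t s' t', in01 s -> in01 t -> in01 s' -> in01 t' ->
     `|g s t - g s' t'| <= L * dist2 s t s' t' `^ th) ->
  continuous_on_sq g.
Proof.
move=> th0 L0 gL s t s01 t01 e e0; have eL : 0 < e / (L + 1) by rewrite divr_gt0 // ltr_wpDl.
exists ((e / (L + 1)) `^ th^-1) => [|s' t' s'01 t'01 d]; first exact: powR_gt0.
rewrite distrC; apply: le_lt_trans (gL _ _ _ _ s01 t01 s'01 t'01) _.
have dth : dist2 s t s' t' `^ th < e / (L + 1).
  have -> : e / (L + 1) = ((e / (L + 1)) `^ th^-1) `^ th.
    by rewrite -powRrM mulVf ?gt_eqF // powRr1 // ltW.
  by apply: gt0_ltr_powR; rewrite ?nnegrE ?powR_ge0 ?dist2_ge0.
apply: le_lt_trans (ler_wpM2l L0 (ltW dth)) _.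
by rewrite mulrCA gtr_pMr // ltr_pdivrMr ?ltr_wpDl // mul1r ltrDl.
Qed.

End Square.


Section Kernel.
Variable R : realType.

Variables (psi : nat -> R -> R) (dpsi : nat -> nat -> R -> R) (lam : nat -> R)
  (vs c gamma : R) (M : nat -> R).
Hypotheses (dpsi_tower : forall j, (0 < j)%N -> deriv_tower01 (psi j) (dpsi j))
  (lam_gt0 : forall j, (0 < j)%N -> 0 < lam j)
  (M_gt0 : forall l, 0 < M l)
  (dpsi_le : forall l j, (0 < j)%N -> forall u, in01 u ->
     `|dpsi j l u| <= M l * j%:R `^ (l%:R + vs))
  (c_gt0 : 0 < c)
  (lam_le : forall j, (0 < j)%N -> lam j <= c * j%:R `^ (- (gamma + 1))).

Let alpha := gamma - 2 * vs.

Definition kernel_term a b j (s t : R) := lam j * dpsi j a s * dpsi j b t.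
Definition kernel_deriv a b (s t : R) := limn (psum (fun j => kernel_term a b j s t)).

Let C0 a b := c * M a * M b.
Let C1 a b := c * (M a.+1 * M b + M a * M b.+1).

Let C0_ge0 a b : 0 <= C0 a b.
Proof. by rewrite !mulr_ge0 // ltW. Qed.

Let C1_ge0 a b : 0 <= C1 a b.
Proof. by rewrite mulr_ge0 ?addr_ge0 ?mulr_ge0 // ltW. Qed.

Lemma dpsi_lipschitz j l u v : (0 < j)%N -> in01 u -> in01 v ->
  `|dpsi j l u - dpsi j l v| <= M l.+1 * j%:R `^ (l.+1%:R + vs) * `|u - v|.
Proof.
move=> j0 u01 v01; rewrite distrC [`|u - v|]distrC.
by apply: has_deriv01_lipschitz => // z z01; [exact: (dpsi_tower j0).2 | exact: dpsi_le].
Qed.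

Lemma kernel_weight_eq a b j : (0 < j)%N ->
  j%:R `^ (- (gamma + 1)) * (j%:R `^ (a%:R + vs) * j%:R `^ (b%:R + vs))
    = j%:R `^ (-1 - (alpha - (a + b)%:R)) :> R.
Proof.
move=> j0; have jr : (0 : R) < j%:R by rewrite ltr0n.
by rewrite -!gt0_powRD //; congr (_ `^ _); rewrite /alpha natrD; ring.
Qed.

Lemma kernel_term_le a b j s t : (0 < j)%N -> in01 s -> in01 t ->
  `|kernel_term a b j s t| <= C0 a b * j%:R `^ (-1 - (alpha - (a + b)%:R)).
Proof.
move=> j0 s01 t01; have lam0 := ltW (lam_gt0 j0).
rewrite -kernel_weight_eq // /kernel_term !normrM (ger0_norm lam0).
have -> : C0 a b * (j%:R `^ (- (gamma + 1)) * (j%:R `^ (a%:R + vs) * j%:R `^ (b%:R + vs)))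
  = c * j%:R `^ (- (gamma + 1)) * (M a * j%:R `^ (a%:R + vs)) * (M b * j%:R `^ (b%:R + vs)).
  by rewrite /C0; ring.
by rewrite !ler_pM ?mulr_ge0 ?normr_ge0 ?lam_le ?dpsi_le.
Qed.

Lemma kernel_term_le_pow a b j s t e : (0 < j)%N -> in01 s -> in01 t ->
  e <= alpha - (a + b)%:R -> `|kernel_term a b j s t| <= C0 a b * j%:R `^ (-1 - e).
Proof.
move=> j0 s01 t01 ee; apply: le_trans (kernel_term_le _ _ j0 s01 t01) _.
by apply: ler_wpM2l => //; rewrite ler_powR ?ler1n // lerB.
Qed.

Lemma kernel_termB_le a b j s t s' t' : (0 < j)%N ->
  in01 s -> in01 t -> in01 s' -> in01 t' ->
  `|kernel_term a b j s t - kernel_term a b j s' t'|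
    <= C1 a b * dist2 s t s' t' * j%:R `^ (- (alpha - (a + b)%:R)).
Proof.
move=> j0 s01 t01 s'01 t'01; set rho := dist2 s t s' t'.
have rho0 : 0 <= rho := dist2_ge0 s t s' t'.
have lam0 := ltW (lam_gt0 j0).
pose P l := (j%:R : R) `^ (l%:R + vs).
have da : `|dpsi j a s - dpsi j a s'| <= M a.+1 * P a.+1 * rho.
  apply: le_trans (dpsi_lipschitz _ j0 s01 s'01) _.
  by apply: ler_wpM2l; [rewrite mulr_ge0 ?powR_ge0 // ltW | exact: normB_le_dist2l].
have db : `|dpsi j b t - dpsi j b t'| <= M b.+1 * P b.+1 * rho.
  apply: le_trans (dpsi_lipschitz _ j0 t01 t'01) _.
  by apply: ler_wpM2l; [rewrite mulr_ge0 ?powR_ge0 // ltW | exact: normB_le_dist2r].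
rewrite /kernel_term -!mulrA -mulrBr normrM ger0_norm //.
apply: le_trans (ler_pM lam0 (normr_ge0 _) (lam_le j0) (normMB_le _ _ _ _)) _.
apply: le_trans (_ : c * j%:R `^ (- (gamma + 1)) *
    (M a.+1 * P a.+1 * rho * (M b * P b) + M a * P a * (M b.+1 * P b.+1 * rho)) <= _).
  apply: ler_wpM2l; first by rewrite mulr_ge0 ?powR_ge0 // ltW.
  by apply: lerD; apply: ler_pM; rewrite ?normr_ge0 ?dpsi_le.
have shift l : P l.+1 = j%:R * P l.
  by rewrite /P -natr1 addrAC gt0_powRD ?ltr0n // powRr1 ?ler0n // mulrC.
have -> : (j%:R : R) `^ (- (alpha - (a + b)%:R))
    = j%:R * (j%:R `^ (- (gamma + 1)) * (P a * P b)).
  rewrite /P kernel_weight_eq // -{2}(powRr1 (ler0n _ j)) -gt0_powRD ?ltr0n //.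
  by congr (_ `^ _); ring.
by rewrite !shift /C1 le_eqVlt; apply/predU1P; left; ring.
Qed.

Variable m : nat.
Hypothesis m_lt_alpha : m%:R < alpha.

Let order_gap a b : (a + b <= m)%N -> 0 < alpha - (a + b)%:R.
Proof. by move=> abm; rewrite subr_gt0 (le_lt_trans _ m_lt_alpha) // ler_nat. Qed.

Let holder_const th a b :=
  C1 a b / (1 - th) + 2 * C0 a b * (1 + (alpha - (a + b)%:R)^-1).

Let holder_const_ge0 th a b : th < 1 -> (a + b <= m)%N -> 0 <= holder_const th a b.
Proof.
move=> th1 abm; have e0 := ltW (order_gap abm).
have th1' : 0 <= 1 - th by rewrite subr_ge0 ltW.
apply: addr_ge0; first exact: divr_ge0.
by apply: mulr_ge0; [exact: mulr_ge0 | rewrite addr_ge0 // invr_ge0].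
Qed.

Lemma kernel_deriv_holder th a b s t s' t' : 0 <= th < 1 -> th <= alpha - m%:R ->
  (a + b <= m)%N -> in01 s -> in01 t -> in01 s' -> in01 t' ->
  `|kernel_deriv a b s t - kernel_deriv a b s' t'|
    <= holder_const th a b * dist2 s t s' t' `^ th.
Proof.
move=> /andP[th0 th1] thm abm s01 t01 s'01 t'01.
have e0 := order_gap abm; have L0 := holder_const_ge0 th1 abm.
have the : th <= alpha - (a + b)%:R by apply: le_trans thm _; rewrite lerB // ler_nat.
have := dist2_ge0 s t s' t'; rewrite le_eqVlt => /predU1P[rho0|rho0].
  have ss : s = s' by apply/eqP; rewrite -subr_eq0 -normr_le0 rho0 normB_le_dist2l.
  have tt : t = t' by apply/eqP; rewrite -subr_eq0 -normr_le0 rho0 (normB_le_dist2r s).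
  by rewrite ss tt subrr normr0 mulr_ge0 ?powR_ge0.
have cv s0 t0 : in01 s0 -> in01 t0 -> cvgn (psum (fun j => kernel_term a b j s0 t0)).
  by move=> s001 t001; apply: psum_cvg e0 _ => j j0; exact: kernel_term_le.
have -> : kernel_deriv a b s t - kernel_deriv a b s' t'
    = limn (psum (fun j => kernel_term a b j s t - kernel_term a b j s' t')).
  by rewrite psumB limB //; exact: cv.
rewrite /holder_const.
apply: (psum_holder_le (A := 2 * C0 a b) e0 _ the rho0 (C1_ge0 a b)); first by rewrite th0.
- move=> j j0; apply: le_trans (ler_normB _ _) _; rewrite -mulrA mulr2n mulrDl mul1r.
  by apply: lerD; exact: kernel_term_le.
- move=> j j0; apply: le_trans (kernel_termB_le _ _ j0 s01 t01 s'01 t'01) _.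
  by apply: ler_wpM2l; [rewrite mulr_ge0 // ltW | rewrite ler_powR ?ler1n // lerN2].
Qed.

Lemma kernel_deriv_derivable_l a b s t : (a + b < m)%N -> in01 s -> in01 t ->
  has_deriv01 (kernel_deriv a b ^~ t) (kernel_deriv a.+1 b ^~ t) s.
Proof.
move=> abm s01 t01; have e0 : 0 < alpha - (a.+1 + b)%:R by apply: order_gap; rewrite addSn.
apply: (has_deriv01_limn_psum (A := C0 a b) (B := C0 a.+1 b) e0) => // j j0 z z01.
- apply: has_deriv01_eq (has_deriv01Z (lam j * dpsi j b t) ((dpsi_tower j0).2 a z z01));
    by move=> u; rewrite /kernel_term mulrAC.
- by apply: kernel_term_le_pow => //; rewrite lerB // ler_nat.
- by apply: kernel_term_le.
Qed.

Lemma kernel_deriv_derivable_r a b s t : (a + b < m)%N -> in01 s -> in01 t ->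
  has_deriv01 (kernel_deriv a b s) (kernel_deriv a b.+1 s) t.
Proof.
move=> abm s01 t01; have e0 : 0 < alpha - (a + b.+1)%:R by apply: order_gap; rewrite addnS.
apply: (has_deriv01_limn_psum (A := C0 a b) (B := C0 a b.+1) e0) => // j j0 z z01.
- by apply: has_deriv01_eq (has_deriv01Z (lam j * dpsi j a s) ((dpsi_tower j0).2 b z z01)).
- by apply: kernel_term_le_pow => //; rewrite lerB // ler_nat addnS.
- by apply: kernel_term_le.
Qed.

Lemma kernel_deriv00 s t : in01 s -> in01 t ->
  kernel_deriv 0 0 s t = limn (fun n => \sum_(1 <= j < n) lam j * psi j s * psi j t).
Proof.
move=> s01 t01; rewrite /kernel_deriv; congr (limn _); apply/funext => n.
by apply: eq_big_nat => j /andP[j0 _]; rewrite /kernel_term !(dpsi_tower j0).1.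
Qed.

Lemma kernel_holder_class th : 0 < th < 1 -> th <= alpha - m%:R ->
  holder_class m th (fun s t => limn (fun n => \sum_(1 <= j < n) lam j * psi j s * psi j t)).
Proof.
move=> /andP[th0 th1] thm; have th01 : 0 <= th < 1 by rewrite th1 ltW.
exists kernel_deriv; split.
- exact: kernel_deriv00.
- move=> a b abm s t s01 t01.
  by split; [apply: kernel_deriv_derivable_l | apply: kernel_deriv_derivable_r].
- move=> a b abm; apply: (holder_continuous_on_sq th0 (holder_const_ge0 th1 abm)).
  by move=> s t s' t'; exact: kernel_deriv_holder.
exists (\sum_(i < m.+1) holder_const th i (m - i) + 1).
  by rewrite ltr_wpDl // sumr_ge0 // => i _; rewrite holder_const_ge0 // subnKC // -ltnS.
move=> a b abm s t s' t' s01 t01 s'01 t'01.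
apply: le_trans (kernel_deriv_holder th01 thm _ s01 t01 s'01 t'01) _; first by rewrite abm.
have am : (a < m.+1)%N by rewrite ltnS -abm leq_addr.
have -> : b = (m - a)%N by rewrite -abm addKn.
rewrite ler_wpM2r ?powR_ge0 // (bigD1 (Ordinal am)) //= -addrA lerDl.
by rewrite addr_ge0 // sumr_ge0 // => i _; rewrite holder_const_ge0 // subnKC // -ltnS.
Qed.

End Kernel.

Theorem mainTheorem11 (R : realType)
  (psi : nat -> R -> R) (dpsi : nat -> nat -> R -> R) (lam : nat -> R)
  (vs c gamma : R) (m : nat) :
  (* each psi_j is infinitely differentiable on [0,1], with derivatives dpsi j l *)
  (forall j, (0 < j)%N -> deriv_tower01 (psi j) (dpsi j)) ->
  (* orthonormality in L^2([0,1]) *)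
  (forall i j, (0 < i)%N -> (0 < j)%N ->
     (\int[lebesgue_measure]_(x in `[0%R, 1%R]) (psi i x * psi j x)%:E
        = ((i == j)%:R)%:E)%E) ->
  (* completeness: only the zero element of L^2([0,1]) is orthogonal to all psi_j *)
  (forall f : R -> R, measurable_fun (`[0%R, 1%R]%classic : set R) f ->
     (\int[lebesgue_measure]_(x in `[0%R, 1%R]) ((f x) ^+ 2)%:E < +oo)%E ->
     (forall j, (0 < j)%N ->
        (\int[lebesgue_measure]_(x in `[0%R, 1%R]) (f x * psi j x)%:E = 0)%E) ->
     ae_eq lebesgue_measure (`[0%R, 1%R]%classic : set R) f (fun _ => 0)) ->
  (* (lam_j) positive and summable *)
  (forall j, (0 < j)%N -> 0 < lam j) ->
  cvgn (fun n => \sum_(1 <= j < n) lam j) ->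
  (* derivative bounds *)
  0 <= vs ->
  (forall l : nat, exists2 M : R, 0 < M &
     forall j, (0 < j)%N -> forall u, 0 <= u <= 1 ->
       `|dpsi j l u| <= M * (j%:R) `^ (l%:R + vs)) ->
  (* eigenvalue decay *)
  0 < c -> 0 < gamma ->
  (forall j, (0 < j)%N -> lam j <= c * (j%:R) `^ (- (gamma + 1))) ->
  (* alpha := gamma - 2 vs > 0, m := max {k in Z | k < alpha} *)
  0 < gamma - 2 * vs ->
  m%:R < gamma - 2 * vs <= m.+1%:R ->
  let alpha := gamma - 2 * vs in
  let beta := alpha - m%:R in
  let K := fun s t : R => limn (fun n => \sum_(1 <= j < n) lam j * psi j s * psi j t) in
  (alpha \isn't a Num.int -> holder_class m beta K) /\
  (alpha \is a Num.int -> forall delta : R, 0 < delta < 1 -> holder_class m delta K).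
Proof.
move=> tower _ _ lam_gt0 _ _ dpsi_bound c_gt0 _ lam_le _ /andP[m_lt m_ge] alpha beta K.
have [M M_gt0 dpsi_le] : exists2 M : nat -> R, (forall l, 0 < M l) &
    forall l j, (0 < j)%N -> forall u, in01 u -> `|dpsi j l u| <= M l * j%:R `^ (l%:R + vs).
  have /choice[M HM] : forall l, exists M : R, 0 < M /\ forall j, (0 < j)%N ->
      forall u, in01 u -> `|dpsi j l u| <= M * j%:R `^ (l%:R + vs).
    by move=> l; have [M M0 HMl] := dpsi_bound l; exists M.
  by exists M => [l | l]; have [] := HM l.
have holder := kernel_holder_class tower lam_gt0 M_gt0 dpsi_le c_gt0 lam_le m_lt.
have beta_gt0 : 0 < beta by rewrite subr_gt0.
have beta_le1 : beta <= 1 by move: m_ge; rewrite -natr1 /beta /alpha; lra.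
split => [alpha_nint | alpha_int delta /andP[delta0 delta1]]; apply: holder => //.
- rewrite beta_gt0 lt_neqAle beta_le1 andbT; apply: contraNneq alpha_nint => beta1.
  by rewrite -(subrK m%:R alpha) -/beta beta1 nat1r natr_int.
- by rewrite delta0.
- have beta_int : beta \is a Num.int by rewrite rpredB ?natr_int.
  apply: le_trans (ltW delta1) _.
  by have := norm_intr_ge1 beta_int (lt0r_neq0 beta_gt0); rewrite gtr0_norm.
Qed.
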